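(* Let $X$ solve $dX_t=\mu_X(X_t;\theta)\,dt+\sigma_X(X_t;\theta)\,dW_t$ on $\mathcal{X}=(x_l,x_r)$ and let $Y_t=V(X_t)$, with structure $\mathcal{S}=(\theta,V)$ ($\theta$ the data-generating parameter). Assume: (a) $\mu_X(\cdot;\theta)$ and $\sigma_X^2(\cdot;\theta)>0$ are twice continuously differentiable; (b) the scale measure satisfies $S(x;\theta)\to-\infty$ as $x\to x_l$ and $S(x;\theta)\to+\infty$ as $x\to x_r$; (c) $V$ is strictly increasing and twice continuously differentiable with inverse $U=V^{-1}$; (d) the drift $\mu_Y$ and diffusion $\sigma_Y^2$ of $Y$ are nonparametrically identified from the discretely sampled process $\{Y_{i\Delta}\}$. Define, on $\bar{\mathcal{X}}=S(\mathcal{X};\theta)$, $$\sigma_{\bar X}^2(\bar x;\vartheta)=s^2(S^{-1}(\bar x;\vartheta);\vartheta)\,\sigma_X^2(S^{-1}(\bar x;\vartheta);\vartheta).$$ Then $\mathcal{S}$ is identified if and only if the following holds: there exist no $\eta_1\neq1$, $\eta_2\neq0$ and $\tilde\theta\neq\theta$ such that $\sigma_{\bar X}^2(\bar x;\tilde\theta)=\sigma_{\bar X}^2(\eta_1\bar x+\eta_2;\theta)/\eta_1^2$ for all $\bar x\in\bar{\mathcal{X}}$.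
   Context: Scale density and scale measure: $s(x;\theta)=\exp\{-\int_{x^*}^x \frac{2\mu_X(z;\theta)}{\sigma_X^2(z;\theta)}dz\}$ and $S(x;\theta)=\int_{x^*}^x s(z;\theta)dz$ for some fixed $x^*\in\mathcal{X}$. For a structure $\mathcal{S}=(\theta,V)$ with $U=V^{-1}$, the drift and diffusion of $Y$ are $\mu_Y(y;\mathcal{S})=\frac{\mu_X(U(y);\theta)}{U'(y)}-\frac12\sigma_X^2(U(y);\theta)\frac{U''(y)}{U'(y)^3}$ and $\sigma_Y(y;\mathcal{S})=\frac{\sigma_X(U(y);\theta)}{U'(y)}$. Two structures are observationally equivalent ($\mathcal{S}\sim\tilde{\mathcal{S}}$) if they yield identical $\mu_Y(\cdot)$ and $\sigma_Y(\cdot)$ on the domain of $Y$. $\mathcal{S}$ is identified (within the model of admissible structures) if $\mathcal{S}\sim\tilde{\mathcal{S}}$ implies $\mathcal{S}=\tilde{\mathcal{S}}$. *)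

From Stdlib Require Import Reals ClassicalEpsilon.
From Coquelicot Require Import Coquelicot.
Open Scope R_scope.

Definition in_dom (xl xr : Rbar) (x : R) : Prop := Rbar_lt xl x /\ Rbar_lt x xr.

(* Filters "x -> x_l" and "x -> x_r" from inside 𝒳. *)
Definition left_end (xl : Rbar) : (R -> Prop) -> Prop :=
  match xl with
  | Finite a => at_right a
  | m_infty => Rbar_locally m_infty
  | p_infty => Rbar_locally p_infty
  end.
Definition right_end (xr : Rbar) : (R -> Prop) -> Prop :=
  match xr with
  | Finite b => at_left b
  | m_infty => Rbar_locally m_infty
  | p_infty => Rbar_locally p_infty
  end.

Definition C2_on (D : R -> Prop) (f : R -> R) : Prop :=
  forall x, D x ->
    ex_derive f x /\ ex_derive (Derive f) x /\ continuous (Derive (Derive f)) x.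

(* Inverse of f restricted to D (meaningful on f(D) when f is injective on D). *)
Definition inv_on (D : R -> Prop) (f : R -> R) (y : R) : R :=
  match excluded_middle_informative (exists x, D x /\ f x = y) with
  | left H => proj1_sig (constructive_indefinite_description _ H)
  | right _ => 0
  end.

Section Model.
Context {Th : Type}.
(* mu th x = μ_X(x;th), sig2 th x = σ_X^2(x;th); σ_X := sqrt σ_X^2 > 0 *)
Variables (mu sig2 : Th -> R -> R) (xl xr : Rbar) (xs : R).

(* scale density s(x;th) and scale measure S(x;th), base point x* = xs *)
Definition scale_dens (th : Th) (x : R) : R :=
  exp (- RInt (fun z => 2 * mu th z / sig2 th z) xs x).
Definition scale_meas (th : Th) (x : R) : R :=
  RInt (fun z => scale_dens th z) xs x.

Definition adm_param (th : Th) : Prop :=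
  C2_on (in_dom xl xr) (mu th) /\
  C2_on (in_dom xl xr) (sig2 th) /\
  (forall x, in_dom xl xr x -> 0 < sig2 th x) /\
  filterlim (scale_meas th) (left_end xl) (Rbar_locally m_infty) /\
  filterlim (scale_meas th) (right_end xr) (Rbar_locally p_infty).

(* assumption (c) on the transformation V (with V' > 0 so that U = V^{-1} is C^2) *)
Definition adm_transf (V : R -> R) : Prop :=
  (forall x y, in_dom xl xr x -> in_dom xl xr y -> x < y -> V x < V y) /\
  C2_on (in_dom xl xr) V /\
  (forall x, in_dom xl xr x -> 0 < Derive V x).

Definition Ydom (V : R -> R) (y : R) : Prop := exists x, in_dom xl xr x /\ V x = y.

Definition Uof (V : R -> R) : R -> R := inv_on (in_dom xl xr) V.

Definition muY (th : Th) (V : R -> R) (y : R) : R :=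
  let U := Uof V in
  mu th (U y) / Derive U y
  - / 2 * sig2 th (U y) * Derive (Derive U) y / (Derive U y) ^ 3.

Definition sigY (th : Th) (V : R -> R) (y : R) : R :=
  let U := Uof V in sqrt (sig2 th (U y)) / Derive U y.

Definition obs_equiv (th : Th) (V : R -> R) (th' : Th) (V' : R -> R) : Prop :=
  (forall y, Ydom V y <-> Ydom V' y) /\
  (forall y, Ydom V y -> muY th V y = muY th' V' y /\ sigY th V y = sigY th' V' y).

(* identification within the model of admissible structures;
   equality of structures = same parameter and same V on 𝒳 *)
Definition identified (th : Th) (V : R -> R) : Prop :=
  forall th' V', adm_param th' -> adm_transf V' -> obs_equiv th V th' V' ->
    th' = th /\ (forall x, in_dom xl xr x -> V' x = V x).

Definition sigXbar2 (th : Th) (xb : R) : R :=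
  let x := inv_on (in_dom xl xr) (scale_meas th) xb in
  (scale_dens th x) ^ 2 * sig2 th x.

End Model.

(* Let g = S(.;th) o V^-1 be the scale of X read through Y.  The scale-transformed process
   X_bar = S(X;th) has no drift, so sigma_Y = sigma_Xbar(g;th) / g' and
   mu_Y = - sigma_Y^2 g'' / (2 g').  Hence (th,V) and (th',V') are observationally equivalent iff
   g''/g' = h''/h' and sigma_Xbar(g;th)/g' = sigma_Xbar(h;th')/h'.  The first condition
   integrates to g = eta1 h + eta2 with eta1 > 0, and then the second one is exactly
   sigma_Xbar^2(xb;th') = sigma_Xbar^2(eta1 xb + eta2;th) / eta1^2.  Conversely, such
   (eta1, eta2, th') yield the equivalent structure (th', V o S(.;th)^-1 o (eta1 S(.;th') + eta2)),
   which is (th,V) itself only when eta1 = 1, eta2 = 0 and th' = th. *)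

From Stdlib Require Import Reals ClassicalEpsilon Classical Lra Ranalysis5.
From Coquelicot Require Import Coquelicot.
Open Scope R_scope.

Definition incr_on (D : R -> Prop) (f : R -> R) : Prop :=
  forall x y, D x -> D y -> x < y -> f x < f y.

Definition rng (D : R -> Prop) (f : R -> R) (y : R) : Prop := exists x, D x /\ f x = y.

Definition interval_set (W : R -> Prop) : Prop :=
  forall a b c, W a -> W b -> a <= c <= b -> W c.

Definition open_set (W : R -> Prop) : Prop := forall x, W x -> locally x W.

Definition incr_diffeo_on (D : R -> Prop) (f : R -> R) : Prop :=
  incr_on D f /\ C2_on D f /\ (forall x, D x -> 0 < Derive f x).

Lemma incr_on_inj D f x y : incr_on D f -> D x -> D y -> f x = f y -> x = y.
Proof.
  intros Hf Hx Hy E.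
  destruct (Rtotal_order x y) as [Hlt | [Heq | Hgt]]; [| exact Heq |].
  - specialize (Hf x y Hx Hy Hlt); lra.
  - specialize (Hf y x Hy Hx Hgt); lra.
Qed.

Lemma inv_on_spec D f y : rng D f y -> D (inv_on D f y) /\ f (inv_on D f y) = y.
Proof.
  intros Hy. unfold inv_on.
  destruct (excluded_middle_informative _) as [H | H]; [| contradiction].
  exact (proj2_sig (constructive_indefinite_description _ H)).
Qed.

Lemma inv_on_f D f x : incr_on D f -> D x -> inv_on D f (f x) = x.
Proof.
  intros Hf Hx.
  destruct (inv_on_spec D f (f x)) as [HD Hfx]; [now exists x |].
  exact (incr_on_inj D f _ _ Hf HD Hx Hfx).
Qed.

Lemma is_derive_continuous (f : R -> R) x l : is_derive f x l -> continuous f x.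
Proof.
  intros H. apply (ex_derive_continuous (K := R_AbsRing) (V := R_NormedModule)).
  now exists l.
Qed.

Lemma derive_zero_const W (f : R -> R) :
  interval_set W -> (forall z, W z -> is_derive f z 0) ->
  forall a b, W a -> W b -> f a = f b.
Proof.
  intros HW Hd a b Ha Hb.
  assert (Hab : forall c, Rmin a b <= c <= Rmax a b -> W c).
  { intros c Hc. unfold Rmin, Rmax in Hc.
    destruct (Rle_dec a b); [apply (HW a b) | apply (HW b a)]; auto; lra. }
  destruct (MVT_gen f a b (fun _ => 0)) as [c [_ Hc]]; [| | lra].
  - intros x Hx. apply Hd, Hab. lra.
  - intros x Hx. apply continuity_pt_filterlim.
    apply (is_derive_continuous f x 0), Hd, Hab, Hx.
Qed.

Lemma ivt_segment (f : R -> R) a b z :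
  a <= b -> (forall t, a <= t <= b -> continuous f t) -> f a <= z <= f b ->
  exists w, a <= w <= b /\ f w = z.
Proof.
  intros Hab Hc Hz.
  destruct (Req_dec (f a) z) as [Ea | Na]; [exists a; split; [lra | exact Ea] |].
  destruct (Req_dec (f b) z) as [Eb | Nb]; [exists b; split; [lra | exact Eb] |].
  destruct (IVT_interv (fun t => f t - z) a b) as [w [Hw Ew]]; try lra.
  - intros t Ht. apply continuity_pt_minus, continuity_pt_const; [| now intros u v].
    apply continuity_pt_filterlim, Hc, Ht.
  - assert (a <> b) by (intros ->; lra). lra.
  - exists w. split; [exact Hw | lra].
Qed.

Lemma is_derive_eq (f : R -> R) x (l l' : R) : is_derive f x l -> l = l' -> is_derive f x l'.
Proof. now intros H <-. Qed.

Lemma C2_is_derive D (f : R -> R) x : C2_on D f -> D x -> is_derive f x (Derive f x).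
Proof. intros Hf Hx. apply Derive_correct, (Hf x Hx). Qed.

Lemma C2_is_derive2 D (f : R -> R) x :
  C2_on D f -> D x -> is_derive (Derive f) x (Derive (Derive f) x).
Proof. intros Hf Hx. apply Derive_correct, (Hf x Hx). Qed.

Lemma C2_continuous D (f : R -> R) x : C2_on D f -> D x -> continuous f x.
Proof. intros Hf Hx. exact (is_derive_continuous _ _ _ (C2_is_derive D f x Hf Hx)). Qed.

Lemma C2_continuous_Derive D (f : R -> R) x : C2_on D f -> D x -> continuous (Derive f) x.
Proof. intros Hf Hx. exact (is_derive_continuous _ _ _ (C2_is_derive2 D f x Hf Hx)). Qed.

Lemma C2_on_intro D (f f1 f2 : R -> R) :
  open_set D ->
  (forall x, D x -> is_derive f x (f1 x)) ->
  (forall x, D x -> is_derive f1 x (f2 x)) ->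
  (forall x, D x -> continuous f2 x) ->
  C2_on D f.
Proof.
  intros HD H1 H2 Hc.
  assert (E1 : forall x, D x -> locally x (fun z => f1 z = Derive f z)).
  { intros x Hx. apply (filter_imp D); [| exact (HD x Hx)].
    intros z Hz. symmetry. apply is_derive_unique, H1, Hz. }
  assert (E2 : forall x, D x -> Derive (Derive f) x = f2 x).
  { intros x Hx. apply is_derive_unique.
    apply (is_derive_ext_loc f1); [exact (E1 x Hx) | exact (H2 x Hx)]. }
  intros x Hx. split; [| split].
  - exists (f1 x). exact (H1 x Hx).
  - exists (f2 x). apply (is_derive_ext_loc f1); [exact (E1 x Hx) | exact (H2 x Hx)].
  - apply (continuous_ext_loc _ f2); [| exact (Hc x Hx)].
    apply (filter_imp D); [| exact (HD x Hx)].
    intros z Hz. symmetry. exact (E2 z Hz).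
Qed.

Section Interval.

Variables xl xr : Rbar.
Local Notation D := (in_dom xl xr).

Lemma in_dom_interval : interval_set D.
Proof.
  intros a b c [Ha1 Ha2] [Hb1 Hb2] Hc. split.
  - destruct xl; simpl in *; auto; lra.
  - destruct xr; simpl in *; auto; lra.
Qed.

Lemma in_dom_open : open_set D.
Proof. intros x [H1 H2]. apply (locally_interval _ x xl xr H1 H2). now split. Qed.

Lemma in_dom_segment x : D x -> exists e, 0 < e /\ forall z, x - e <= z <= x + e -> D z.
Proof.
  intros Hx. destruct (in_dom_open x Hx) as [eps Heps].
  exists (eps / 2). split; [apply Rdiv_lt_0_compat; [apply cond_pos | lra] |].
  intros z Hz. apply Heps. change (Rabs (z - x) < eps).
  assert (0 < eps) by apply cond_pos. apply Rabs_def1; lra.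
Qed.

Variable f : R -> R.
Hypothesis f_incr : incr_on D f.
Hypothesis f_cont : forall t, D t -> continuous f t.
Local Notation U := (inv_on D f).

Lemma inv_on_segment a b z :
  D a -> D b -> f a <= z <= f b -> a <= U z <= b /\ f (U z) = z.
Proof.
  intros Ha Hb Hz.
  assert (Hab : a <= b).
  { destruct (Rle_lt_dec a b) as [H | H]; [exact H |].
    specialize (f_incr b a Hb Ha H). lra. }
  destruct (ivt_segment f a b z Hab) as [w [Hw <-]]; [| exact Hz |].
  - intros t Ht. apply f_cont, (in_dom_interval a b); auto.
  - rewrite inv_on_f; auto. apply (in_dom_interval a b); auto.
Qed.

Lemma rng_segment y : rng D f y -> exists a b, D a /\ D b /\ a < U y < b.
Proof.
  intros Hy. destruct (inv_on_spec D f y Hy) as [HU _].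
  destruct (in_dom_segment _ HU) as [e [He HDe]].
  exists (U y - e), (U y + e). repeat split; try apply HDe; lra.
Qed.

Lemma rng_open : open_set (rng D f).
Proof.
  intros y Hy. destruct (rng_segment y Hy) as [a [b [Ha [Hb Hab]]]].
  destruct (inv_on_spec D f y Hy) as [HU HfU].
  assert (f a < y < f b) by (rewrite <- HfU; split; apply f_incr; auto; lra).
  apply (locally_interval _ y (f a) (f b)); simpl; try lra.
  intros z Hz1 Hz2. destruct (inv_on_segment a b z Ha Hb) as [HUz HfUz]; [simpl in *; lra |].
  exists (U z). split; [apply (in_dom_interval a b) |]; auto.
Qed.

Lemma rng_interval : interval_set (rng D f).
Proof.
  intros ya yb c [a [Ha <-]] [b [Hb <-]] Hc.
  destruct (inv_on_segment a b c Ha Hb Hc) as [HUc HfUc].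
  exists (U c). split; [apply (in_dom_interval a b) |]; auto.
Qed.

Lemma inv_on_incr : incr_on (rng D f) U.
Proof.
  intros y z Hy Hz Hyz.
  destruct (inv_on_spec D f y Hy) as [Hy1 Hy2], (inv_on_spec D f z Hz) as [Hz1 Hz2].
  destruct (Rlt_le_dec (U y) (U z)) as [H | H]; [exact H |].
  destruct (Req_dec (U y) (U z)) as [E | N].
  - rewrite <- Hy2, <- Hz2, E in Hyz. lra.
  - specialize (f_incr (U z) (U y) Hz1 Hy1 ltac:(lra)). lra.
Qed.

Lemma inv_on_continuous y : rng D f y -> continuous U y.
Proof.
  intros Hy. destruct (rng_segment y Hy) as [a [b [Ha [Hb Hab]]]].
  destruct (inv_on_spec D f y Hy) as [HU HfU].
  assert (HDab : forall t, a <= t <= b -> D t) by (intros; apply (in_dom_interval a b); auto).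
  apply continuity_pt_filterlim.
  apply (continuity_pt_recip_interv f U a b); [lra | | | | | ].
  - intros s t Hs Hst Ht. apply f_incr; auto; apply HDab; lra.
  - intros z Hz1 Hz2. apply (inv_on_segment a b z Ha Hb). lra.
  - intros z Hz1 Hz2. apply (inv_on_segment a b z Ha Hb). lra.
  - intros t Ht. apply continuity_pt_filterlim, f_cont, HDab, Ht.
  - rewrite <- HfU. split; apply f_incr; auto; lra.
Qed.

End Interval.

Section InverseDiffeo.

Variables (xl xr : Rbar) (f : R -> R).
Local Notation D := (in_dom xl xr).
Local Notation U := (inv_on D f).
Hypothesis f_diffeo : incr_diffeo_on D f.

Let f_incr : incr_on D f := proj1 f_diffeo.
Let f_C2 : C2_on D f := proj1 (proj2 f_diffeo).
Let f_cont t (Ht : D t) : continuous f t := C2_continuous D f t f_C2 Ht.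

Lemma is_derive_inv_on y : rng D f y -> is_derive U y (/ Derive f (U y)).
Proof.
  intros Hy. destruct (rng_segment xl xr f y Hy) as [a [b [Ha [Hb Hab]]]].
  destruct (inv_on_spec D f y Hy) as [HU HfU].
  assert (HDab : forall t, a <= t <= b -> D t) by (intros; apply (in_dom_interval xl xr a b); auto).
  assert (Hfab : f a < y < f b) by (rewrite <- HfU; split; apply f_incr; auto; lra).
  assert (Prf : forall t, U (f a) <= t <= U (f b) -> derivable_pt f t).
  { intros t Ht. rewrite !inv_on_f in Ht by auto.
    apply ex_derive_Reals_0, (f_C2 t (HDab t Ht)). }
  assert (Pin : U (f a) <= U y <= U (f b)) by (rewrite !inv_on_f by auto; lra).
  assert (H := derivable_pt_lim_recip_interv f U (f a) (f b) y Prf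
                 (proj2 (continuity_pt_filterlim _ _)
                    (inv_on_continuous xl xr f f_incr f_cont y Hy))
                 ltac:(lra) Hfab Pin).
  rewrite Derive_Reals in H. apply is_derive_Reals.
  replace (/ Derive f (U y)) with (1 / Derive f (U y)) by (unfold Rdiv; ring).
  apply H.
  - intros z Hz. apply (inv_on_segment xl xr f f_incr f_cont a b z Ha Hb Hz).
  - assert (0 < Derive f (U y)) by exact (proj2 (proj2 f_diffeo) _ HU). lra.
Qed.

Lemma inv_on_diffeo : incr_diffeo_on (rng D f) U.
Proof.
  assert (Hopen := rng_open xl xr f f_incr f_cont).
  assert (HU : forall y, rng D f y -> D (U y)) by (intros y Hy; apply (inv_on_spec D f y Hy)).
  assert (Hpos : forall y, rng D f y -> 0 < Derive f (U y))
    by (intros y Hy; apply (proj2 (proj2 f_diffeo)), HU, Hy).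
  split; [| split].
  - exact (inv_on_incr xl xr f f_incr).
  - apply (C2_on_intro _ _ (fun y => / Derive f (U y))
             (fun y => - Derive (Derive f) (U y) / Derive f (U y) ^ 3));
      [exact Hopen | exact is_derive_inv_on | |].
    + intros y Hy.
      assert (Hpy := Hpos y Hy).
      eapply is_derive_eq.
      * apply (is_derive_inv (fun z => Derive f (U z))); [| lra].
        eapply is_derive_comp; [exact (C2_is_derive2 D f _ f_C2 (HU y Hy)) |].
        exact (is_derive_inv_on y Hy).
      * simpl. unfold scal; simpl; unfold mult; simpl. field. lra.
    + intros y Hy.
      assert (Hpy := Hpos y Hy).
      assert (CU := inv_on_continuous xl xr f f_incr f_cont y Hy).
      assert (CDf := continuous_comp _ _ _ CU (C2_continuous_Derive D f _ f_C2 (HU y Hy))).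
      assert (CD2f := continuous_comp _ _ _ CU (proj2 (proj2 (f_C2 _ (HU y Hy))))).
      apply continuity_pt_filterlim in CDf, CD2f. apply continuity_pt_filterlim.
      apply continuity_pt_div; [now apply continuity_pt_opp | | now apply pow_nonzero; lra].
      apply (continuity_pt_comp (fun z => Derive f (U z)) (fun t => t ^ 3)); [exact CDf |].
      apply derivable_continuous_pt, derivable_pt_pow.
  - intros y Hy. rewrite (is_derive_unique _ _ _ (is_derive_inv_on y Hy)).
    apply Rinv_0_lt_compat, Hpos, Hy.
Qed.

End InverseDiffeo.

Lemma is_derive_comp_C2 D E (f g : R -> R) x :
  C2_on E f -> C2_on D g -> D x -> E (g x) ->
  is_derive (fun z => f (g z)) x (Derive f (g x) * Derive g x).
Proof.
  intros Hf Hg Hx Hgx. eapply is_derive_eq.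
  - apply (is_derive_comp f g x);
      [exact (C2_is_derive E f _ Hf Hgx) | exact (C2_is_derive D g x Hg Hx)].
  - simpl. unfold scal; simpl; unfold mult; simpl. ring.
Qed.

Lemma is_derive2_comp_C2 D E (f g : R -> R) x :
  open_set D -> (forall z, D z -> E (g z)) -> C2_on E f -> C2_on D g -> D x ->
  is_derive (Derive (fun z => f (g z))) x
    (Derive (Derive f) (g x) * Derive g x * Derive g x + Derive f (g x) * Derive (Derive g) x).
Proof.
  intros HD HDE Hf Hg Hx.
  apply (is_derive_ext_loc (fun z => Derive f (g z) * Derive g z)).
  - apply (filter_imp D); [| exact (HD x Hx)].
    intros z Hz. symmetry. apply is_derive_unique, (is_derive_comp_C2 D E); auto.
  - eapply is_derive_eq.
    + apply (is_derive_mult (fun z => Derive f (g z)) (Derive g)); [| | intros; apply Rmult_comm].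
      * apply is_derive_comp; [apply (C2_is_derive2 E f _ Hf (HDE x Hx)) |].
        exact (C2_is_derive D g x Hg Hx).
      * exact (C2_is_derive2 D g x Hg Hx).
    + simpl. unfold scal, plus, mult; simpl. unfold mult; simpl. ring.
Qed.

Lemma incr_diffeo_comp D E (f g : R -> R) :
  open_set D -> (forall x, D x -> E (g x)) ->
  incr_diffeo_on E f -> incr_diffeo_on D g -> incr_diffeo_on D (fun x => f (g x)).
Proof.
  intros HD HDE [f_incr [f_C2 f_pos]] [g_incr [g_C2 g_pos]].
  assert (Hd1 := fun x Hx => is_derive_comp_C2 D E f g x f_C2 g_C2 Hx (HDE x Hx)).
  split; [| split].
  - intros x y Hx Hy Hxy. apply f_incr; auto.
  - apply (C2_on_intro _ _ (Derive (fun z => f (g z)))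
             (fun x => Derive (Derive f) (g x) * Derive g x * Derive g x
                       + Derive f (g x) * Derive (Derive g) x)); [exact HD | | |].
    + intros x Hx. apply Derive_correct. eexists. exact (Hd1 x Hx).
    + intros x Hx. exact (is_derive2_comp_C2 D E f g x HD HDE f_C2 g_C2 Hx).
    + intros x Hx.
      assert (Cg := C2_continuous D g x g_C2 Hx).
      assert (C1f := continuous_comp _ _ _ Cg (C2_continuous_Derive E f _ f_C2 (HDE x Hx))).
      assert (C2f := continuous_comp _ _ _ Cg (proj2 (proj2 (f_C2 _ (HDE x Hx))))).
      assert (C1g := C2_continuous_Derive D g x g_C2 Hx).
      assert (C2g := proj2 (proj2 (g_C2 x Hx))).
      apply continuity_pt_filterlim in C1f, C2f, C1g, C2g. apply continuity_pt_filterlim.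
      apply continuity_pt_plus; repeat apply continuity_pt_mult; assumption.
  - intros x Hx.
    replace (Derive _ x) with (Derive f (g x) * Derive g x)
      by (symmetry; apply is_derive_unique, Hd1, Hx).
    apply Rmult_lt_0_compat; [apply f_pos, HDE |]; auto.
Qed.

Lemma affine_diffeo D a b : open_set D -> 0 < a -> incr_diffeo_on D (fun t => a * t + b).
Proof.
  intros HD Ha.
  assert (H1 : forall t : R, is_derive (fun t : R => a * t + b) t a)
    by (intros t; auto_derive; auto; ring).
  split; [| split].
  - intros x y _ _ Hxy. apply Rplus_lt_compat_r, Rmult_lt_compat_l; assumption.
  - apply (C2_on_intro _ _ (fun _ => a) (fun _ => 0)); auto.
    + intros x _. auto_derive; auto.
    + intros x _. apply continuous_const.
  - intros x _. now rewrite (is_derive_unique _ _ _ (H1 x)).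
Qed.

Lemma Derive_affine_on W (g h : R -> R) a b x :
  open_set W -> (forall z, W z -> h z = a * g z + b) -> W x -> ex_derive g x ->
  Derive h x = a * Derive g x.
Proof.
  intros HW Hhg Hx [l Hl]. rewrite (is_derive_unique g x l Hl).
  apply is_derive_unique. apply (is_derive_ext_loc (fun z => a * g z + b)).
  - apply (filter_imp W); [| exact (HW x Hx)]. intros z Hz. symmetry. exact (Hhg z Hz).
  - eapply is_derive_eq.
    + apply (is_derive_plus (fun z => a * g z) (fun _ => b)); [apply is_derive_scal, Hl |].
      apply is_derive_const.
    + simpl. unfold plus, zero; simpl. ring.
Qed.

Lemma affine_of_log_derivative_eq W (g h : R -> R) y0 :
  interval_set W -> W y0 -> C2_on W g -> C2_on W h ->
  (forall y, W y -> 0 < Derive g y) -> (forall y, W y -> 0 < Derive h y) ->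
  (forall y, W y -> Derive (Derive g) y / Derive g y = Derive (Derive h) y / Derive h y) ->
  exists e1 e2, 0 < e1 /\
    forall y, W y -> g y = e1 * h y + e2 /\ Derive g y = e1 * Derive h y.
Proof.
  intros HW Hy0 Hg Hh Hg1 Hh1 Hlog.
  set (e1 := Derive g y0 / Derive h y0).
  assert (Hratio_deriv : forall z, W z -> is_derive (fun z => Derive g z / Derive h z) z 0).
  { intros z Hz. assert (Hz1 := Hg1 z Hz). assert (Hz2 := Hh1 z Hz).
    specialize (Hlog z Hz).
    eapply is_derive_eq; [apply is_derive_div; [apply (C2_is_derive2 W) .. | lra]; auto |].
    replace (Derive (Derive g) z) with (Derive (Derive g) z / Derive g z * Derive g z)
      by (field; lra).
    rewrite Hlog. field. lra. }
  assert (Hratio : forall y, W y -> Derive g y = e1 * Derive h y).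
  { intros y Hy. assert (Hy2 := Hh1 y Hy).
    unfold e1. rewrite <- (derive_zero_const W _ HW Hratio_deriv y y0 Hy Hy0). field. lra. }
  set (e2 := g y0 - e1 * h y0).
  exists e1, e2. split; [unfold e1; apply Rdiv_lt_0_compat; auto |].
  intros y Hy. split; [| exact (Hratio y Hy)].
  unfold e2.
  rewrite <- (derive_zero_const W (fun z => g z - e1 * h z) HW) with y y0; auto; [ring |].
  intros z Hz. eapply is_derive_eq.
  - apply (is_derive_minus g (fun z => e1 * h z)); [apply (C2_is_derive W g z Hg Hz) |].
    apply is_derive_scal, (C2_is_derive W h z Hh Hz).
  - rewrite (Hratio z Hz). simpl. unfold minus, plus, opp; simpl. ring.
Qed.

Section Model.

Context {Th : Type}.
Variables (mu sig2 : Th -> R -> R) (xl xr : Rbar) (xs : R).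
Hypothesis xs_dom : in_dom xl xr xs.

Local Notation D := (in_dom xl xr).
Local Notation S := (scale_meas mu sig2 xs).
Local Notation s := (scale_dens mu sig2 xs).
Local Notation adm := (adm_param mu sig2 xl xr xs).

Lemma left_end_witness (P : R -> Prop) : left_end xl P -> exists x, D x /\ P x.
Proof.
  destruct xs_dom as [Hl Hr]. intros HP.
  assert (HD : left_end xl D).
  { destruct xl as [a | |]; simpl in *; [| tauto |].
    2: { exists xs. intros y Hy. split; [exact I | destruct xr; simpl in *; auto; lra]. }
    exists (mkposreal (xs - a) ltac:(lra)). intros y Hy Hay. simpl in Hy.
    change (Rabs (y - a) < xs - a) in Hy. apply Rabs_def2 in Hy.
    split; [exact Hay | destruct xr; simpl in *; auto; lra]. }
  assert (Hproper : ProperFilter (left_end xl)) by (destruct xl; simpl; typeclasses eauto).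
  exact (Hierarchy.filter_ex _ (filter_and _ _ HD HP)).
Qed.

Lemma right_end_witness (P : R -> Prop) : right_end xr P -> exists x, D x /\ P x.
Proof.
  destruct xs_dom as [Hl Hr]. intros HP.
  assert (HD : right_end xr D).
  { destruct xr as [b | |]; simpl in *; [| | tauto].
    2: { exists xs. intros y Hy. split; [destruct xl; simpl in *; auto; lra | exact I]. }
    exists (mkposreal (b - xs) ltac:(lra)). intros y Hy Hyb. simpl in Hy.
    change (Rabs (y - b) < b - xs) in Hy. apply Rabs_def2 in Hy.
    split; [destruct xl; simpl in *; auto; lra | exact Hyb]. }
  assert (Hproper : ProperFilter (right_end xr)) by (destruct xr; simpl; typeclasses eauto).
  exact (Hierarchy.filter_ex _ (filter_and _ _ HD HP)).
Qed.

Lemma is_derive_RInt_dom (g : R -> R) x :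
  (forall t, D t -> continuous g t) -> D x -> is_derive (fun z => RInt g xs z) x (g x).
Proof.
  intros Hg Hx. apply (is_derive_RInt g _ xs x); [| exact (Hg x Hx)].
  apply (filter_imp D); [| exact (in_dom_open xl xr x Hx)].
  intros z Hz. apply (RInt_correct (V := R_CompleteNormedModule)).
  apply (ex_RInt_continuous (V := R_CompleteNormedModule)).
  intros t Ht. apply Hg. unfold Rmin, Rmax in Ht.
  destruct (Rle_dec xs z);
    [apply (in_dom_interval xl xr xs z) | apply (in_dom_interval xl xr z xs)]; auto; lra.
Qed.

Lemma drift_ratio_continuous th t :
  adm th -> D t -> continuous (fun z => 2 * mu th z / sig2 th z) t.
Proof.
  intros [Hmu [Hsig [Hpos _]]] Ht.
  assert (Cmu := C2_continuous _ _ t Hmu Ht). assert (Csig := C2_continuous _ _ t Hsig Ht).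
  apply continuity_pt_filterlim in Cmu, Csig. apply continuity_pt_filterlim.
  apply continuity_pt_div; [| exact Csig | specialize (Hpos t Ht); lra].
  apply continuity_pt_mult; [apply continuity_pt_const; now intros u v | exact Cmu].
Qed.

Lemma is_derive_scale_dens th x :
  adm th -> D x -> is_derive (s th) x (- (2 * mu th x / sig2 th x) * s th x).
Proof.
  intros Ha Hx. unfold scale_dens.
  assert (Hint := is_derive_RInt_dom _ x (fun t Ht => drift_ratio_continuous th t Ha Ht) Hx).
  exact (is_derive_comp exp _ x _ _ (is_derive_exp _) (is_derive_opp _ _ _ Hint)).
Qed.

Lemma is_derive_scale_meas th x : adm th -> D x -> is_derive (S th) x (s th x).
Proof.
  intros Ha Hx. apply is_derive_RInt_dom; [| exact Hx].
  intros t Ht. exact (is_derive_continuous _ _ _ (is_derive_scale_dens th t Ha Ht)).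
Qed.

Lemma Derive_scale_meas th x : adm th -> D x -> Derive (S th) x = s th x.
Proof. intros Ha Hx. apply is_derive_unique, is_derive_scale_meas; assumption. Qed.

Lemma Derive2_scale_meas th x :
  adm th -> D x -> Derive (Derive (S th)) x = - (2 * mu th x / sig2 th x) * s th x.
Proof.
  intros Ha Hx. apply is_derive_unique.
  apply (is_derive_ext_loc (s th)); [| exact (is_derive_scale_dens th x Ha Hx)].
  apply (filter_imp D); [| exact (in_dom_open xl xr x Hx)].
  intros z Hz. symmetry. exact (Derive_scale_meas th z Ha Hz).
Qed.

Lemma scale_meas_diffeo th : adm th -> incr_diffeo_on D (S th).
Proof.
  intros Ha. split; [| split].
  - intros x y Hx Hy Hxy.
    destruct (MVT_cor2 (S th) (s th) x y Hxy) as [c [E Hc]].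
    + intros c Hc. apply is_derive_Reals, is_derive_scale_meas; [exact Ha |].
      apply (in_dom_interval xl xr x y); auto.
    + assert (0 < s th c * (y - x)) by (apply Rmult_lt_0_compat; [apply exp_pos | lra]). lra.
  - apply (C2_on_intro _ _ (s th) (fun x => - (2 * mu th x / sig2 th x) * s th x)).
    + exact (in_dom_open xl xr).
    + intros x Hx. exact (is_derive_scale_meas th x Ha Hx).
    + intros x Hx. exact (is_derive_scale_dens th x Ha Hx).
    + intros x Hx.
      assert (C1 := drift_ratio_continuous th x Ha Hx).
      assert (C2 := is_derive_continuous _ _ _ (is_derive_scale_dens th x Ha Hx)).
      apply continuity_pt_filterlim in C1, C2. apply continuity_pt_filterlim.
      apply continuity_pt_mult; [apply continuity_pt_opp |]; assumption.
  - intros x Hx. rewrite Derive_scale_meas by assumption. apply exp_pos.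
Qed.

Lemma scale_meas_xs th : S th xs = 0.
Proof. apply (RInt_point (V := R_CompleteNormedModule)). Qed.

Lemma scale_meas_surj th z : adm th -> rng D (S th) z.
Proof.
  intros Ha. destruct (scale_meas_diffeo th Ha) as [S_incr [S_C2 _]].
  destruct Ha as [_ [_ [_ [HL HR]]]].
  destruct (left_end_witness (fun x => S th x < z)) as [a [Ha Hza]].
  { apply (HL (fun v => v < z)). now exists z. }
  destruct (right_end_witness (fun x => z < S th x)) as [b [Hb Hzb]].
  { apply (HR (fun v => z < v)). now exists z. }
  destruct (inv_on_segment xl xr (S th) S_incr (fun t Ht => C2_continuous D _ t S_C2 Ht)
              a b z Ha Hb) as [Hab Hz]; [lra |].
  exists (inv_on D (S th) z). split; [apply (in_dom_interval xl xr a b) |]; auto.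
Qed.

Local Notation Ydom := (Ydom xl xr).
Local Notation Uof := (Uof xl xr).

Definition sigXbar2_affine (th th' : Th) (e1 e2 : R) : Prop :=
  forall xb, sigXbar2 mu sig2 xl xr xs th' xb
             = sigXbar2 mu sig2 xl xr xs th (e1 * xb + e2) / e1 ^ 2.

Definition scale_of_obs (th : Th) (V : R -> R) (y : R) : R := S th (Uof V y).

Lemma Ydom_open V : adm_transf xl xr V -> open_set (Ydom V).
Proof.
  intros [V_incr [V_C2 _]]. exact (rng_open xl xr V V_incr (fun t => C2_continuous D V t V_C2)).
Qed.

Lemma Ydom_interval V : adm_transf xl xr V -> interval_set (Ydom V).
Proof.
  intros [V_incr [V_C2 _]].
  exact (rng_interval xl xr V V_incr (fun t => C2_continuous D V t V_C2)).
Qed.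

Lemma scale_of_obs_diffeo th V :
  adm th -> adm_transf xl xr V -> incr_diffeo_on (Ydom V) (scale_of_obs th V).
Proof.
  intros Ha HV. apply (incr_diffeo_comp _ D (S th) (Uof V)); [exact (Ydom_open V HV) | | |].
  - intros y Hy. exact (proj1 (inv_on_spec D V y Hy)).
  - exact (scale_meas_diffeo th Ha).
  - exact (inv_on_diffeo xl xr V HV).
Qed.

Lemma sigXbar2_scale_meas th x :
  adm th -> D x -> sigXbar2 mu sig2 xl xr xs th (S th x) = s th x ^ 2 * sig2 th x.
Proof.
  intros Ha Hx. unfold sigXbar2. rewrite inv_on_f; [reflexivity | | exact Hx].
  exact (proj1 (scale_meas_diffeo th Ha)).
Qed.

Lemma sigXbar2_nonneg th xb : adm th -> 0 <= sigXbar2 mu sig2 xl xr xs th xb.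
Proof.
  intros Ha. destruct (scale_meas_surj th xb Ha) as [x [Hx <-]].
  rewrite sigXbar2_scale_meas by assumption.
  apply Rmult_le_pos; [apply pow2_ge_0 | left; apply Ha, Hx].
Qed.

Lemma obs_coefficients th V y :
  adm th -> adm_transf xl xr V -> Ydom V y ->
  sigY sig2 xl xr th V y
    = sqrt (sigXbar2 mu sig2 xl xr xs th (scale_of_obs th V y)) / Derive (scale_of_obs th V) y /\
  muY mu sig2 xl xr th V y
    = - / 2 * sigY sig2 xl xr th V y ^ 2 * Derive (Derive (scale_of_obs th V)) y
      / Derive (scale_of_obs th V) y.
Proof.
  intros Ha HV Hy.
  destruct (inv_on_diffeo xl xr V HV) as [_ [U_C2 U_pos]].
  assert (HU : forall z, Ydom V z -> D (Uof V z)) by (intros z Hz; apply (inv_on_spec D V z Hz)).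
  assert (S_C2 := proj1 (proj2 (scale_meas_diffeo th Ha))).
  assert (E1 : Derive (scale_of_obs th V) y = s th (Uof V y) * Derive (Uof V) y).
  { rewrite <- Derive_scale_meas by auto. apply is_derive_unique.
    exact (is_derive_comp_C2 _ D (S th) (Uof V) y S_C2 U_C2 Hy (HU y Hy)). }
  assert (E2 : Derive (Derive (scale_of_obs th V)) y
               = - (2 * mu th (Uof V y) / sig2 th (Uof V y)) * s th (Uof V y) * Derive (Uof V) y ^ 2
                 + s th (Uof V y) * Derive (Derive (Uof V)) y).
  { rewrite <- Derive2_scale_meas, <- Derive_scale_meas by auto.
    apply is_derive_unique. eapply is_derive_eq.
    - exact (is_derive2_comp_C2 _ D (S th) (Uof V) y (Ydom_open V HV) HU S_C2 U_C2 Hy).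
    - ring. }
  unfold scale_of_obs at 1. rewrite E1, sigXbar2_scale_meas by auto.
  assert (Hs := exp_pos (- RInt (fun z => 2 * mu th z / sig2 th z) xs (Uof V y))).
  change (0 < s th (Uof V y)) in Hs.
  assert (Hsig : 0 < sig2 th (Uof V y)) by apply Ha, HU, Hy.
  assert (HU1 : 0 < Derive (Uof V) y) by exact (U_pos y Hy).
  assert (Hsqrt : sqrt (sig2 th (Uof V y)) ^ 2 = sig2 th (Uof V y)) by (apply pow2_sqrt; lra).
  unfold sigY, muY. split.
  - rewrite sqrt_mult_alt, sqrt_pow2 by (apply pow2_ge_0 || lra). field. lra.
  - rewrite E2. unfold Rdiv. rewrite Rpow_mult_distr, Hsqrt. field. lra.
Qed.

Lemma sigY_pos th V y : adm th -> adm_transf xl xr V -> Ydom V y -> 0 < sigY sig2 xl xr th V y.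
Proof.
  intros Ha HV Hy. destruct (inv_on_diffeo xl xr V HV) as [_ [_ U_pos]].
  apply Rdiv_lt_0_compat; [apply sqrt_lt_R0, Ha, (inv_on_spec D V y Hy) | exact (U_pos y Hy)].
Qed.

Lemma scale_affine_of_obs_equiv th V th' V' :
  adm th -> adm_transf xl xr V -> adm th' -> adm_transf xl xr V' ->
  obs_equiv mu sig2 xl xr th V th' V' ->
  exists e1 e2, 0 < e1 /\
    (forall y, Ydom V y -> scale_of_obs th V y = e1 * scale_of_obs th' V' y + e2) /\
    sigXbar2_affine th th' e1 e2.
Proof.
  intros Ha HV Ha' HV' [HY Hcoef].
  set (g := scale_of_obs th V). set (h := scale_of_obs th' V').
  destruct (scale_of_obs_diffeo th V Ha HV) as [_ [g_C2 g_pos]].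
  destruct (scale_of_obs_diffeo th' V' Ha' HV') as [_ [h_C2 h_pos]].
  assert (Hg := fun y Hy => obs_coefficients th V y Ha HV Hy).
  assert (Hh := fun y Hy => obs_coefficients th' V' y Ha' HV' (proj1 (HY y) Hy)).
  fold g in Hg. fold h in Hh.
  destruct (affine_of_log_derivative_eq (Ydom V) g h (V xs)) as [e1 [e2 [He1 Hgh]]].
  - exact (Ydom_interval V HV).
  - now exists xs.
  - exact g_C2.
  - intros y Hy. apply h_C2, HY, Hy.
  - exact g_pos.
  - intros y Hy. apply h_pos, HY, Hy.
  - intros y Hy.
    destruct (Hg y Hy) as [_ Emu], (Hh y Hy) as [_ Emu'], (Hcoef y Hy) as [Emu_eq Esig_eq].
    assert (HsY := sigY_pos th V y Ha HV Hy).
    rewrite Emu_eq, Emu', <- Esig_eq in Emu.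
    apply (Rmult_eq_reg_l (- / 2 * sigY sig2 xl xr th V y ^ 2)).
    + unfold Rdiv in *. rewrite <- !Rmult_assoc. symmetry. exact Emu.
    + apply Rmult_integral_contrapositive. split; [lra | apply pow_nonzero; lra].
  - exists e1, e2. split; [exact He1 | split; [intros y Hy; apply Hgh, Hy |]].
    intros xb. destruct (scale_meas_surj th' xb Ha') as [x' [Hx' <-]].
    assert (Hy' : Ydom V' (V' x')) by (now exists x').
    assert (Hy : Ydom V (V' x')) by (apply HY, Hy').
    assert (Ehy : h (V' x') = S th' x').
    { unfold h, scale_of_obs, Uof.
      rewrite inv_on_f; [reflexivity | exact (proj1 HV') | exact Hx']. }
    destruct (Hg _ Hy) as [Esig _], (Hh _ Hy) as [Esig' _], (Hgh _ Hy) as [Eg Eg1].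
    assert (Hh1 : 0 < Derive h (V' x')) by exact (h_pos _ Hy').
    rewrite (proj2 (Hcoef _ Hy)), Esig', Eg, Eg1, Ehy in Esig.
    assert (Esqrt : sqrt (sigXbar2 mu sig2 xl xr xs th' (S th' x'))
                    = sqrt (sigXbar2 mu sig2 xl xr xs th (e1 * S th' x' + e2)) / e1).
    { replace (sqrt (sigXbar2 mu sig2 xl xr xs th' (S th' x')))
        with (sqrt (sigXbar2 mu sig2 xl xr xs th' (S th' x')) / Derive h (V' x') * Derive h (V' x'))
        by (field; lra).
      rewrite Esig. field. lra. }
    rewrite <- (pow2_sqrt (sigXbar2 _ _ _ _ _ th' _)), Esqrt by (apply sigXbar2_nonneg; exact Ha').
    rewrite <- (pow2_sqrt (sigXbar2 _ _ _ _ _ th (e1 * _ + e2))) at 2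
      by (apply sigXbar2_nonneg; exact Ha).
    field. lra.
Qed.

Lemma obs_equiv_of_scale_affine th V th' V' e1 e2 :
  adm th -> adm_transf xl xr V -> adm th' -> adm_transf xl xr V' ->
  (forall y, Ydom V y <-> Ydom V' y) -> 0 < e1 ->
  (forall y, Ydom V y -> scale_of_obs th V y = e1 * scale_of_obs th' V' y + e2) ->
  sigXbar2_affine th th' e1 e2 ->
  obs_equiv mu sig2 xl xr th V th' V'.
Proof.
  intros Ha HV Ha' HV' HY He1 Hgh Hrel. split; [exact HY |]. intros y Hy.
  set (g := scale_of_obs th V) in *. set (h := scale_of_obs th' V') in *.
  destruct (scale_of_obs_diffeo th V Ha HV) as [_ [g_C2 g_pos]].
  assert (HW := Ydom_open V HV).
  assert (Hhg : forall z, Ydom V z -> h z = / e1 * g z + - e2 / e1)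
    by (intros z Hz; rewrite (Hgh z Hz); field; lra).
  assert (Hh1 : forall z, Ydom V z -> Derive h z = / e1 * Derive g z)
    by (intros z Hz; exact (Derive_affine_on _ g h _ _ z HW Hhg Hz (proj1 (g_C2 z Hz)))).
  assert (Hh2 : Derive (Derive h) y = / e1 * Derive (Derive g) y).
  { apply (Derive_affine_on _ (Derive g) (Derive h) _ 0 y HW); [| exact Hy | apply g_C2, Hy].
    intros z Hz. rewrite Rplus_0_r. exact (Hh1 z Hz). }
  assert (Hg1 : 0 < Derive g y) by exact (g_pos y Hy).
  destruct (obs_coefficients th V y Ha HV Hy) as [Esig Emu].
  destruct (obs_coefficients th' V' y Ha' HV' (proj1 (HY y) Hy)) as [Esig' Emu'].
  fold g in Esig, Emu. fold h in Esig', Emu'.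
  assert (Hsig : sigY sig2 xl xr th V y = sigY sig2 xl xr th' V' y).
  { rewrite Esig, Esig', Hh1, (Hgh y Hy) by exact Hy.
    fold h. rewrite Hrel, sqrt_div_alt, sqrt_pow2 by (apply pow_lt || idtac; lra).
    field. lra. }
  split; [| exact Hsig].
  rewrite Emu, Emu', <- Hsig, Hh1, Hh2 by exact Hy. field. lra.
Qed.

Definition reparam (th th' : Th) (e1 e2 x : R) : R := inv_on D (S th) (e1 * S th' x + e2).

Lemma reparam_spec th th' e1 e2 x :
  adm th -> D (reparam th th' e1 e2 x) /\ S th (reparam th th' e1 e2 x) = e1 * S th' x + e2.
Proof. intros Ha. apply inv_on_spec, scale_meas_surj, Ha. Qed.

Lemma reparam_diffeo th th' e1 e2 :
  adm th -> adm th' -> 0 < e1 -> incr_diffeo_on D (reparam th th' e1 e2).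
Proof.
  intros Ha Ha' He1.
  apply (incr_diffeo_comp D (rng D (S th)) (inv_on D (S th)) (fun x => e1 * S th' x + e2));
    [exact (in_dom_open xl xr) | | |].
  - intros x _. apply scale_meas_surj, Ha.
  - exact (inv_on_diffeo xl xr _ (scale_meas_diffeo th Ha)).
  - apply (incr_diffeo_comp D (fun _ => True) (fun t => e1 * t + e2));
      [exact (in_dom_open xl xr) | auto | |].
    + apply affine_diffeo; [intros t _; apply filter_true | exact He1].
    + exact (scale_meas_diffeo th' Ha').
Qed.

Lemma reparam_onto th th' e1 e2 x :
  adm th -> adm th' -> 0 < e1 -> D x -> exists x', D x' /\ reparam th th' e1 e2 x' = x.
Proof.
  intros Ha Ha' He1 Hx. destruct (scale_meas_surj th' ((S th x - e2) / e1) Ha') as [x' [Hx' Ex']].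
  exists x'. split; [exact Hx' |]. unfold reparam. rewrite Ex'.
  replace (e1 * ((S th x - e2) / e1) + e2) with (S th x) by (field; lra).
  apply inv_on_f; [apply scale_meas_diffeo, Ha | exact Hx].
Qed.

Lemma reparam_obs_equiv th th' V e1 e2 :
  adm th -> adm th' -> adm_transf xl xr V -> 0 < e1 ->
  sigXbar2_affine th th' e1 e2 ->
  let V' := fun x => V (reparam th th' e1 e2 x) in
  adm_transf xl xr V' /\ obs_equiv mu sig2 xl xr th V th' V'.
Proof.
  intros Ha Ha' HV He1 Hrel V'.
  assert (Hphi := reparam_diffeo th th' e1 e2 Ha Ha' He1).
  assert (HV' : adm_transf xl xr V').
  { apply (incr_diffeo_comp D D V (reparam th th' e1 e2));
      [exact (in_dom_open xl xr) | | exact HV | exact Hphi].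
    intros x _. apply reparam_spec, Ha. }
  assert (HY : forall y, Ydom V y <-> Ydom V' y).
  { intros y. split.
    - intros [x [Hx <-]]. destruct (reparam_onto th th' e1 e2 x Ha Ha' He1 Hx) as [x' [Hx' <-]].
      now exists x'.
    - intros [x' [Hx' <-]]. exists (reparam th th' e1 e2 x').
      split; [apply reparam_spec, Ha | reflexivity]. }
  split; [exact HV' |].
  apply (obs_equiv_of_scale_affine _ _ _ _ e1 e2); auto.
  intros y Hy. destruct (proj1 (HY y) Hy) as [x' [Hx' <-]].
  destruct (reparam_spec th th' e1 e2 x' Ha) as [Hphix' Ephix'].
  unfold scale_of_obs, Uof.
  rewrite (inv_on_f D V' x') by (exact (proj1 HV') || exact Hx').
  unfold V'. rewrite inv_on_f by (exact (proj1 HV) || exact Hphix').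
  exact Ephix'.
Qed.

Lemma reparam_fixed_trivial th V e1 e2 :
  adm th -> adm_transf xl xr V ->
  (forall x, D x -> V (reparam th th e1 e2 x) = V x) -> e1 = 1 /\ e2 = 0.
Proof.
  intros Ha HV Hfix.
  assert (Haff : forall x, D x -> e1 * S th x + e2 = S th x).
  { intros x Hx. destruct (reparam_spec th th e1 e2 x Ha) as [Hphix <-]. f_equal.
    exact (incr_on_inj D V _ _ (proj1 HV) Hphix Hx (Hfix x Hx)). }
  assert (He2 : e2 = 0) by (specialize (Haff xs xs_dom); rewrite scale_meas_xs in Haff; lra).
  destruct (scale_meas_surj th 1 Ha) as [x1 [Hx1 E1]].
  specialize (Haff x1 Hx1). rewrite E1 in Haff. split; lra.
Qed.

Lemma transf_eq_of_scale_of_obs_eq th V V' :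
  adm th -> adm_transf xl xr V -> (forall y, Ydom V y -> Ydom V' y) ->
  (forall y, Ydom V y -> scale_of_obs th V y = scale_of_obs th V' y) ->
  forall x, D x -> V' x = V x.
Proof.
  intros Ha HV HY Hgh x Hx.
  assert (Hy : Ydom V (V x)) by (now exists x).
  destruct (inv_on_spec D V' (V x) (HY _ Hy)) as [HU' EU'].
  specialize (Hgh _ Hy). unfold scale_of_obs, Uof in Hgh.
  rewrite inv_on_f in Hgh by (exact (proj1 HV) || exact Hx).
  apply (incr_on_inj D (S th)) in Hgh; [| apply scale_meas_diffeo, Ha | exact Hx | exact HU'].
  rewrite Hgh at 1. exact EU'.
Qed.

End Model.

Theorem theorem5 (Th : Type) (mu sig2 : Th -> R -> R) (xl xr : Rbar) (xs : R)
  (th : Th) (V : R -> R) :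
  Rbar_lt xl xr ->
  in_dom xl xr xs ->
  adm_param mu sig2 xl xr xs th ->
  adm_transf xl xr V ->
  (identified mu sig2 xl xr xs th V <->
   ~ (exists (eta1 eta2 : R) (th' : Th),
        0 < eta1 /\
        adm_param mu sig2 xl xr xs th' /\
        (eta1 <> 1 \/ eta2 <> 0 \/ th' <> th) /\
        (forall xb, (exists x, in_dom xl xr x /\ scale_meas mu sig2 xs th x = xb) ->
           sigXbar2 mu sig2 xl xr xs th' xb
           = sigXbar2 mu sig2 xl xr xs th (eta1 * xb + eta2) / eta1 ^ 2))).
Proof.
  intros _ Hxs Ha HV. split.
  - intros Hid [e1 [e2 [th' [He1 [Ha' [Hnontriv Hrel]]]]]].
    assert (Hrel' : sigXbar2_affine mu sig2 xl xr xs th th' e1 e2)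
      by (intros xb; apply Hrel, (scale_meas_surj mu sig2 xl xr xs Hxs th xb Ha)).
    destruct (reparam_obs_equiv mu sig2 xl xr xs Hxs th th' V e1 e2 Ha Ha' HV He1 Hrel')
      as [HV' Hobs].
    destruct (Hid _ _ Ha' HV' Hobs) as [-> HVV].
    destruct (reparam_fixed_trivial mu sig2 xl xr xs Hxs th V e1 e2 Ha HV HVV) as [-> ->].
    tauto.
  - intros Hno th' V' Ha' HV' Hobs.
    destruct (scale_affine_of_obs_equiv mu sig2 xl xr xs Hxs th V th' V' Ha HV Ha' HV' Hobs)
      as [e1 [e2 [He1 [Hgh Hrel]]]].
    assert (Htriv : e1 = 1 /\ e2 = 0 /\ th' = th).
    { apply NNPP. intros Hnt. apply Hno. exists e1, e2, th'.
      split; [exact He1 | split; [exact Ha' | split; [| intros xb _; apply Hrel]]].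
      destruct (classic (e1 = 1)), (classic (e2 = 0)); tauto. }
    destruct Htriv as [-> [-> ->]]. split; [reflexivity |].
    apply (transf_eq_of_scale_of_obs_eq mu sig2 xl xr xs Hxs th V V' Ha HV); [apply Hobs |].
    intros y Hy. rewrite (Hgh y Hy). ring.
Qed.
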